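(* Let $1\le k\le m$, let $\phi_{m,k}$ be the automorphism of the free group $F(A_1,\dots,A_m,B_1,\dots,B_k)$ described below, and let $\bar B_k$ be the image of $B_k$ in the abelianization $\mathbb Z^{m+k}$. Then $\|\phi_{m,k}^n(B_k)\|\sim|(\phi_{m,k}^{ab})^n(\bar B_k)|_1\sim|(\phi_{m,k}^{ab})^n(\bar B_k)|_\infty\sim n^k$.
   Context: $\phi_{m,k}(A_i)=A_1\cdots A_{i-1}A_iA_{i-1}^{-1}\cdots A_1^{-1}$ for $1\le i\le m$, and $\phi_{m,k}(B_j)=A_1\cdots A_m(B_1\cdots B_j)A_{j-1}^{-1}\cdots A_1^{-1}$ for $1\le j\le k$. $\|\cdot\|$ is word length with respect to the free basis; $|\cdot|_1$ and $|\cdot|_\infty$ are the $\ell_1$ and $\ell_\infty$ norms of integer vectors with respect to the basis of images of $A_i,B_j$; $\phi^{ab}$ is the induced automorphism of the abelianization. $f\sim g$ means $f\le Ag+B$ and $g\le A'f+B'$ for some constants $A,A'>0$, $B,B'\ge0$. *)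

From mathcomp Require Import all_boot all_order all_algebra.
Set Implicit Arguments. Unset Strict Implicit. Unset Printing Implicit Defensive.
Import Order.TTheory GRing.Theory Num.Theory.

(* Generators are coded by natural numbers: A_i (1<=i<=m) is (i-1),
   B_j (1<=j<=k) is (m + j - 1).  A letter is (generator, is_inverse). *)
Definition letter := (nat * bool)%type.
Definition word := seq letter.

Definition reduce (w : word) : word :=
  foldr (fun x s => match s with
                    | y :: s' => if (y.1 == x.1) && (y.2 != x.2) then s' else x :: s
                    | [::] => [:: x] end) [::] w.

Definition inv_word (w : word) : word := rev (map (fun x => (x.1, ~~ x.2)) w).

Definition Aprefix (p : nat) : word := [seq (i, false) | i <- iota 0 p].
Definition Bprefix (m j : nat) : word := [seq (m + i, false) | i <- iota 0 j].

Definition phi_gen (m k g : nat) : word :=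
  if g < m then
    (* A_i with i = g+1 :  A_1..A_{i-1} A_i A_{i-1}^{-1}..A_1^{-1} *)
    Aprefix g ++ [:: (g, false)] ++ inv_word (Aprefix g)
  else
    (* B_j with j = g-m+1 : A_1..A_m B_1..B_j A_{j-1}^{-1}..A_1^{-1} *)
    let j := (g - m).+1 in Aprefix m ++ Bprefix m j ++ inv_word (Aprefix j.-1).

(* the endomorphism phi_{m,k} on (reduced representatives of) group elements *)
Definition phi_word (m k : nat) (w : word) : word :=
  reduce (flatten (map (fun x => if x.2 then inv_word (phi_gen m k x.1)
                                 else phi_gen m k x.1) w)).

Definition Bk (m k : nat) : word := [:: (m + k.-1, false)].

Definition phi_len (m k n : nat) : nat := size (iter n (phi_word m k) (Bk m k)).

Definition ab_word (m k : nat) (w : word) : 'cV[int]_(m + k) :=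
  \col_(i < m + k) (\sum_(x <- w | x.1 == (i : nat)) (if x.2 then -1 else 1 : int))%R.

Definition phi_ab (m k : nat) : 'M[int]_(m + k) :=
  \matrix_(i < m + k, j < m + k) (ab_word m k (phi_gen m k j)) i ord0.

Definition phi_ab_iter (m k n : nat) : 'cV[int]_(m + k) :=
  ((phi_ab m k) ^+ n *m ab_word m k (Bk m k))%R.

Definition l1norm (p : nat) (v : 'cV[int]_p) : nat := \sum_(i < p) absz (v i ord0).
Definition linfnorm (p : nat) (v : 'cV[int]_p) : nat := \max_(i < p) absz (v i ord0).

Definition asym_equiv (f g : nat -> nat) : Prop :=
  exists (A B A' B' : rat), (0 < A)%R /\ (0 <= B)%R /\ (0 < A')%R /\ (0 <= B')%R /\
    forall n, ((f n)%:R <= A * (g n)%:R + B)%R /\ ((g n)%:R <= A' * (f n)%:R + B')%R.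

(* The automorphism fixes every A_i up to conjugation: writing P_r(n) = A_1^n ... A_r^n,
   one has phi^n(A_1 ... A_r) = P_r(n+1) P_r(n)^-1 in the free group, hence
     phi^(n+1)(B_(j+1)) = P_m(n+1) P_m(n)^-1 . phi^n(B_1 ... B_(j+1)) . (P_j(n+1) P_j(n)^-1)^-1.
   Induction on n and j, with Bernoulli's inequality, bounds the reduced length of
   phi^n(B_(j+1)) by 4m (n+1)^(j+1), and the same recursion shows that the exponent sum of
   A_m in it is the binomial coefficient C(n+j, j+1) >= n^(j+1) / (j+1)!.  Since the
   l1-norm of the abelianised word is at most its length and the l1- and l-infinity norms
   are comparable, taking j = k-1 squeezes all three quantities between multiples of n^k. *)

From mathcomp Require Import all_boot all_order all_algebra zify.
Set Implicit Arguments. Unset Strict Implicit. Unset Printing Implicit Defensive.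
Import GRing.Theory Num.Theory.

Definition inv_letter (x : letter) : letter := (x.1, ~~ x.2).

Lemma inv_letterK : involutive inv_letter.
Proof. by case=> a b; rewrite /inv_letter negbK. Qed.

Lemma cancelsE (x y : letter) : (y.1 == x.1) && (y.2 != x.2) = (y == inv_letter x).
Proof. by case: x y => a b [c d]; rewrite /inv_letter -pair_eqE /=; case: b; case: d. Qed.

Definition push (x : letter) (s : word) : word :=
  if s is y :: s' then if y == inv_letter x then s' else x :: s else [:: x].

Fixpoint reduced (s : word) : bool :=
  if s is x :: ((y :: _) as s') then (y != inv_letter x) && reduced s' else true.

Notation "u =F v" := (reduce u = reduce v) (at level 70, no associativity).

Lemma reduceE w : reduce w = foldr push [::] w.
Proof. by elim: w => //= x w <-; case: (reduce w) => // y s /=; rewrite cancelsE. Qed.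

Lemma reduce_cons x w : reduce (x :: w) = push x (reduce w).
Proof. by rewrite !reduceE. Qed.

Lemma reduced_push x s : reduced s -> reduced (push x s).
Proof.
case: s => [//|y s] red_ys /=; case: ifP => [_|/negbT y_x]; last by rewrite /= y_x.
by case: s red_ys => //= z s /andP[].
Qed.

Lemma reduced_reduce w : reduced (reduce w).
Proof. by elim: w => // x w red_w; rewrite reduce_cons reduced_push. Qed.

Lemma reduce_id s : reduced s -> reduce s = s.
Proof.
elim: s => // x s IH red_xs; rewrite reduce_cons IH.
  by case: s {IH} red_xs => //= y s /andP[/negbTE->].
by case: s {IH} red_xs => //= y s /andP[].
Qed.

Lemma reduce_idem w : reduce (reduce w) = reduce w.
Proof. exact/reduce_id/reduced_reduce. Qed.

Lemma push_inv_letterK x s : reduced s -> push x (push (inv_letter x) s) = s.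
Proof.
case: s => [|y s] /=; first by rewrite eqxx.
rewrite inv_letterK; case: eqP => [->|_] red_s /=; last by rewrite eqxx.
by case: s red_s => //= z s /andP[/negbTE->].
Qed.

Lemma reduce_cat u v : reduce (u ++ v) = foldr push (reduce v) u.
Proof. by rewrite !reduceE foldr_cat. Qed.

Lemma reduce_catr u v : reduce (u ++ reduce v) = reduce (u ++ v).
Proof. by rewrite !reduce_cat reduce_idem. Qed.

Lemma reduce_push_cat x s v : reduce (push x s ++ v) = push x (reduce (s ++ v)).
Proof.
case: s => [|y s]; first exact: reduce_cons.
rewrite {1}/push; case: ifP => [/eqP->|_]; last exact: reduce_cons.
by rewrite cat_cons reduce_cons push_inv_letterK ?reduced_reduce.
Qed.

Lemma reduce_catl u v : reduce (reduce u ++ v) = reduce (u ++ v).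
Proof.
elim: u => // x u IH.
by rewrite [reduce (x :: u)]reduce_cons reduce_push_cat IH -reduce_cons.
Qed.

Lemma freq_cat u u' v v' : u =F u' -> v =F v' -> u ++ v =F u' ++ v'.
Proof.
by move=> eq_u eq_v; rewrite -reduce_catl -reduce_catr eq_u eq_v reduce_catl reduce_catr.
Qed.

Lemma freq_catl u v v' : v =F v' -> u ++ v =F u ++ v'.
Proof. exact: freq_cat. Qed.

Lemma inv_word_cons x u : inv_word (x :: u) = inv_word u ++ [:: inv_letter x].
Proof. by rewrite /inv_word map_cons rev_cons cats1. Qed.

Lemma inv_word1 x : inv_word [:: x] = [:: inv_letter x].
Proof. by []. Qed.

Lemma inv_word_cat u v : inv_word (u ++ v) = inv_word v ++ inv_word u.
Proof. by rewrite /inv_word map_cat rev_cat. Qed.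

Lemma inv_wordK : involutive inv_word.
Proof. by elim=> // x u IH; rewrite inv_word_cons inv_word_cat IH inv_word1 inv_letterK. Qed.

Lemma size_inv_word u : size (inv_word u) = size u.
Proof. by rewrite size_rev size_map. Qed.

Lemma reduce_catKV u v : u ++ inv_word u ++ v =F v.
Proof.
elim: u v => // x u IH v.
rewrite inv_word_cons cat_cons -catA reduce_cons IH reduce_cons.
by rewrite push_inv_letterK ?reduced_reduce.
Qed.

Lemma reduce_catK u v : inv_word u ++ u ++ v =F v.
Proof. by rewrite -{2}(inv_wordK u) reduce_catKV. Qed.

Lemma reduce_catV u : reduce (u ++ inv_word u) = [::].
Proof. by have := reduce_catKV u [::]; rewrite cats0. Qed.

Lemma freq_inv u v : u =F v -> inv_word u =F inv_word v.
Proof.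
move=> eq_uv; transitivity (reduce (inv_word u ++ v ++ inv_word v)).
  by rewrite -[inv_word u in LHS]cats0 -(reduce_catV v) reduce_catr.
by rewrite -(reduce_catK u (inv_word v)); apply/freq_catl/freq_cat.
Qed.

Lemma size_reduce w : size (reduce w) <= size w.
Proof.
elim: w => // x w IH; rewrite reduce_cons.
by case: (reduce w) IH => // y s; rewrite /push; case: ifP => /= _; lia.
Qed.

Lemma size_reduce_cat u v : size (reduce (u ++ v)) <= size (reduce u) + size (reduce v).
Proof.
rewrite -reduce_catl -reduce_catr.
by apply: leq_trans (size_reduce _) _; rewrite size_cat.
Qed.

Lemma size_reduce_cat3 u v w :
  size (reduce (u ++ v ++ w)) <= size u + size (reduce v) + size w.
Proof.
apply: leq_trans (size_reduce_cat _ _) _; rewrite -addnA leq_add ?size_reduce //.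
by apply: leq_trans (size_reduce_cat _ _) _; rewrite leq_add2l size_reduce.
Qed.

Section Substitution.

Variable sigma : nat -> word.

Definition subst_letter (x : letter) : word :=
  if x.2 then inv_word (sigma x.1) else sigma x.1.

Definition subst_word (w : word) : word := flatten (map subst_letter w).

Lemma subst_word_cons x w : subst_word (x :: w) = subst_letter x ++ subst_word w.
Proof. by []. Qed.

Lemma subst_word_cat u v : subst_word (u ++ v) = subst_word u ++ subst_word v.
Proof. by rewrite /subst_word map_cat flatten_cat. Qed.

Lemma subst_letter_inv x : subst_letter (inv_letter x) = inv_word (subst_letter x).
Proof. by case: x => a []; rewrite /subst_letter /= ?inv_wordK. Qed.

Lemma subst_word_inv w : subst_word (inv_word w) = inv_word (subst_word w).
Proof.
elim: w => // x w IH.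
by rewrite inv_word_cons subst_word_cat IH subst_word_cons cats0 subst_letter_inv inv_word_cat.
Qed.

Lemma reduce_subst_reduce w : subst_word (reduce w) =F subst_word w.
Proof.
elim: w => // x w IH; rewrite reduce_cons subst_word_cons -reduce_catr -IH reduce_catr.
case: (reduce w) => // y s; rewrite /push; case: ifP => [/eqP->|_] //.
by rewrite subst_word_cons subst_letter_inv reduce_catKV.
Qed.

Lemma freq_subst u v : u =F v -> subst_word u =F subst_word v.
Proof. by move=> eq_uv; rewrite -reduce_subst_reduce eq_uv reduce_subst_reduce. Qed.

Lemma iter_subst_cat n u v :
  iter n subst_word (u ++ v) = iter n subst_word u ++ iter n subst_word v.
Proof. by elim: n => //= n ->; rewrite subst_word_cat. Qed.

Lemma iter_subst_inv n u : iter n subst_word (inv_word u) = inv_word (iter n subst_word u).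
Proof. by elim: n => //= n ->; rewrite subst_word_inv. Qed.

Lemma iter_subst_nil n : iter n subst_word [::] = [::].
Proof. by elim: n => //= n ->. Qed.

Lemma iter_reduce_subst n w : reduced w ->
  iter n (fun w => reduce (subst_word w)) w = reduce (iter n subst_word w).
Proof.
move=> red_w; elim: n => [|n /= ->]; first by rewrite reduce_id.
exact: reduce_subst_reduce.
Qed.

End Substitution.

Definition letters_below (p : nat) (w : word) : bool := all (fun x : letter => x.1 < p) w.

Lemma letters_below_cat p u v :
  letters_below p (u ++ v) = letters_below p u && letters_below p v.
Proof. exact: all_cat. Qed.

Lemma letters_below_inv_word p w : letters_below p (inv_word w) = letters_below p w.
Proof. by rewrite /letters_below all_rev all_map. Qed.

Lemma letters_below_subst_word sigma p w :
  (forall g, g < p -> letters_below p (sigma g)) ->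
  letters_below p w -> letters_below p (subst_word sigma w).
Proof.
move=> sigma_p; elim: w => // x w IH /andP[x_p w_p].
rewrite subst_word_cons letters_below_cat IH // andbT.
by rewrite /subst_letter; case: x.2; rewrite ?letters_below_inv_word sigma_p.
Qed.

Section ExponentSums.

Local Open Scope ring_scope.

Definition sgn_letter (x : letter) : int := if x.2 then -1 else 1.

Definition expsum (i : nat) (w : word) : int := \sum_(x <- w | x.1 == i) sgn_letter x.

Lemma expsum1 i x : expsum i [:: x] = if x.1 == i then sgn_letter x else 0.
Proof. by rewrite /expsum big_cons big_nil; case: ifP; rewrite ?addr0. Qed.

Lemma expsum_cat i u v : expsum i (u ++ v) = expsum i u + expsum i v.
Proof. by rewrite /expsum big_cat. Qed.

Lemma expsum_cons i x w : expsum i (x :: w) = expsum i [:: x] + expsum i w.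
Proof. by rewrite -expsum_cat. Qed.

Lemma expsum_inv_letter i x : expsum i [:: inv_letter x] = - expsum i [:: x].
Proof. by rewrite !expsum1 /sgn_letter /=; case: eqP; case: x.2; rewrite ?oppr0 ?opprK. Qed.

Lemma expsum_inv_word i w : expsum i (inv_word w) = - expsum i w.
Proof.
elim: w => [|x w IH]; first by rewrite /expsum !big_nil oppr0.
rewrite inv_word_cons expsum_cat IH expsum_inv_letter.
by rewrite [expsum i (x :: w)]expsum_cons opprD addrC.
Qed.

Lemma expsum_reduce i w : expsum i (reduce w) = expsum i w.
Proof.
elim: w => // x w IH; rewrite reduce_cons expsum_cons -IH.
case: (reduce w) => [|y s]; first by rewrite /expsum big_nil addr0.
rewrite /push; case: ifP => [/eqP->|_]; last by rewrite -expsum_cat.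
by rewrite [expsum i (_ :: s)]expsum_cons expsum_inv_letter addNKr.
Qed.

Lemma expsum_nseq i r n : expsum i (nseq n (r, false)) = if r == i then n%:Z else 0.
Proof.
elim: n => [|n IH]; first by rewrite /expsum big_nil; case: ifP.
rewrite [nseq _ _]/= expsum_cons IH expsum1 /=.
by case: ifP; rewrite ?addr0 // -addn1 PoszD addrC.
Qed.

Lemma expsum_subst_word sigma p i w : letters_below p w ->
  expsum i (subst_word sigma w) = \sum_(l < p) expsum i (sigma l) * expsum l w.
Proof.
elim: w => [_|x w IH /andP[x_p w_p]].
  by rewrite /expsum big_nil big1 // => l _; rewrite big_nil mulr0.
rewrite subst_word_cons expsum_cat IH //.
under [in RHS]eq_bigr => l _ do rewrite expsum_cons mulrDr.
rewrite big_split /=; congr (_ + _); rewrite (bigD1 (Ordinal x_p)) //= big1 => [|l l_x].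
  rewrite expsum1 eqxx addr0 /subst_letter /sgn_letter.
  by case: x.2; rewrite ?expsum_inv_word ?mulrN1 ?mulr1.
rewrite expsum1 ifN ?mulr0 //; apply: contra l_x => /eqP x_l.
by apply/eqP/val_inj.
Qed.

Lemma sum_absz_expsum1 p x : (\sum_(i < p) absz (expsum i [:: x]) <= 1)%N.
Proof.
case: (ltnP x.1 p) => [x_p|p_x].
  rewrite (bigD1 (Ordinal x_p)) //= big1 => [|i i_x].
    by rewrite expsum1 eqxx addn0 /sgn_letter; case: x.2.
  rewrite expsum1 ifN //; apply: contra i_x => /eqP x_i.
  by apply/eqP/val_inj.
rewrite big1 // => i _; rewrite expsum1 ifN //.
by apply/eqP=> x_i; move: (ltn_ord i); rewrite -x_i ltnNge p_x.
Qed.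

Lemma sum_absz_expsum p w : (\sum_(i < p) absz (expsum i w) <= size w)%N.
Proof.
elim: w => [|x w IH]; first by rewrite big1 // => i _; rewrite /expsum big_nil.
apply: leq_trans (leq_add (sum_absz_expsum1 p x) IH); rewrite -big_split leq_sum // => i _.
by rewrite /= [expsum i (x :: w)]expsum_cons; lia.
Qed.

End ExponentSums.

Fixpoint Apowers (r n : nat) : word :=
  if r is r'.+1 then Apowers r' n ++ nseq n (r', false) else [::].

Lemma size_Apowers r n : size (Apowers r n) = r * n.
Proof. by elim: r => //= r IH; rewrite size_cat IH size_nseq mulSn addnC. Qed.

Lemma Apowers1 r : Apowers r 1 = Aprefix r.
Proof. by elim: r => // r /= ->; rewrite /Aprefix -addn1 iotaD map_cat. Qed.

Lemma Apowers0 r : Apowers r 0 = [::].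
Proof. by elim: r => //= r ->. Qed.

Lemma Aprefix_S r : Aprefix r.+1 = Aprefix r ++ [:: (r, false)].
Proof. by rewrite -!Apowers1. Qed.

Lemma expsum_Apowers i r n : expsum i (Apowers r n) = if i < r then Posz n else 0%R.
Proof.
elim: r => [|r IH]; first by rewrite /expsum big_nil.
rewrite /= expsum_cat IH expsum_nseq.
case: (ltngtP i r) => [i_r|r_i|->]; rewrite ?ltnn ?ltnS ?leqnn ?add0r //.
- by rewrite ltnW // addr0.
- by rewrite leqNgt r_i.
Qed.

Lemma bernoulli_expn a j : a ^ j.+1 + j.+1 * a ^ j <= a.+1 ^ j.+1.
Proof.
elim: j => [|j IH]; first by rewrite expn1 expn0 muln1 addn1.
rewrite [a.+1 ^ _]expnS; apply: leq_trans (leq_mul (leqnn a.+1) IH).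
rewrite [a ^ j.+2]expnS [a ^ j.+1]expnS; nia.
Qed.

Section PhiIterates.

Variables m k : nat.

Local Notation Phi := (subst_word (phi_gen m k)).

Lemma phi_gen_A r : r < m -> phi_gen m k r = Aprefix r ++ (r, false) :: inv_word (Aprefix r).
Proof. by rewrite /phi_gen => ->. Qed.

Lemma phi_gen_B j : phi_gen m k (m + j) = Aprefix m ++ Bprefix m j.+1 ++ inv_word (Aprefix j).
Proof. by rewrite /phi_gen ltnNge leq_addr /= addKn. Qed.

Lemma Phi_nseq r n : r < m ->
  Phi (nseq n (r, false)) =F Aprefix r ++ nseq n (r, false) ++ inv_word (Aprefix r).
Proof.
move=> r_m; elim: n => [|n IH]; first by rewrite reduce_catV.
rewrite [nseq n.+1 _]/= subst_word_cons /subst_letter /= phi_gen_A // -catA.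
apply: freq_catl; rewrite !cat_cons !reduce_cons; congr push.
by rewrite -reduce_catr IH reduce_catr reduce_catK.
Qed.

Lemma Phi_Apowers r n : r <= m -> Phi (Apowers r n) =F Apowers r n.+1 ++ inv_word (Aprefix r).
Proof.
elim: r => [//|r IH] r_m /=.
rewrite subst_word_cat (freq_cat (IH (ltnW r_m)) (Phi_nseq n r_m)) -!catA.
apply: freq_catl; rewrite reduce_catK Aprefix_S inv_word_cat.
rewrite -[_ :: nseq n _]/(nseq n.+1 _) -addn1 nseqD -catA.
by apply: freq_catl; rewrite reduce_catKV.
Qed.

Lemma iter_Phi_Aprefix r n : r <= m ->
  iter n Phi (Aprefix r) =F Apowers r n.+1 ++ inv_word (Apowers r n).
Proof.
move=> r_m; elim: n => [|n IH]; first by rewrite Apowers1 Apowers0 cats0.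
rewrite iterS; transitivity (reduce (Phi (Apowers r n.+1 ++ inv_word (Apowers r n)))).
  exact: freq_subst.
rewrite subst_word_cat subst_word_inv.
rewrite (freq_cat (Phi_Apowers n.+1 r_m) (freq_inv (Phi_Apowers n r_m))).
by rewrite inv_word_cat inv_wordK -catA; apply/freq_catl/reduce_catK.
Qed.

Lemma iter_Phi_B1 n : iter n Phi [:: (m, false)] =F Apowers m n ++ [:: (m, false)].
Proof.
elim: n => [|n IH]; first by rewrite Apowers0.
have Phi_B1 : Phi [:: (m, false)] = Aprefix m ++ [:: (m, false)].
  have := phi_gen_B 0; rewrite addn0 => gen_B1.
  by rewrite -[Phi _]/(phi_gen m k m ++ [::]) gen_B1 /= addn0 !cats0.
rewrite iterSr Phi_B1 iter_subst_cat.
rewrite (freq_cat (iter_Phi_Aprefix n (leqnn m)) IH) -catA.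
by apply/freq_catl/reduce_catK.
Qed.

Lemma iter_Phi_B n j : j <= m ->
  iter n.+1 Phi [:: (m + j, false)] =F
  (Apowers m n.+1 ++ inv_word (Apowers m n)) ++ iter n Phi (Bprefix m j.+1) ++
  inv_word (Apowers j n.+1 ++ inv_word (Apowers j n)).
Proof.
move=> j_m; rewrite iterSr subst_word_cons cats0 /subst_letter /= phi_gen_B.
rewrite !iter_subst_cat iter_subst_inv.
apply: freq_cat; first exact: iter_Phi_Aprefix.
by apply/freq_catl/freq_inv/iter_Phi_Aprefix.
Qed.

Lemma Bprefix_S j : Bprefix m j.+1 = Bprefix m j ++ [:: (m + j, false)].
Proof. by rewrite /Bprefix -addn1 iotaD map_cat. Qed.

(* [lenB n j] and [expB n j] are about phi^n(B_(j+1)); the generator A_m is coded by [m.-1]. *)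
Definition lenB (n j : nat) : nat := size (reduce (iter n Phi [:: (m + j, false)])).

Lemma size_iter_Phi_Bprefix n j :
  size (reduce (iter n Phi (Bprefix m j))) <= \sum_(i < j) lenB n i.
Proof.
elim: j => [|j IH]; first by rewrite iter_subst_nil big_ord0.
rewrite Bprefix_S iter_subst_cat big_ord_recr /=.
exact: leq_trans (size_reduce_cat _ _) (leq_add IH (leqnn _)).
Qed.

Lemma lenB0 n : lenB n 0 <= m * n + 1.
Proof.
rewrite /lenB addn0 iter_Phi_B1.
by apply: leq_trans (size_reduce _) _; rewrite size_cat size_Apowers.
Qed.

Lemma lenB_succ n j : j <= m ->
  lenB n.+1 j <= (m + j) * n.*2.+1 + \sum_(i < j.+1) lenB n i.
Proof.
move=> j_m; rewrite [lenB n.+1 j]/lenB iter_Phi_B //.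
apply: leq_trans (size_reduce_cat3 _ _ _) _.
have := size_iter_Phi_Bprefix n j.+1.
rewrite size_inv_word !size_cat !size_inv_word !size_Apowers; lia.
Qed.

Lemma lenB_le n j : j < m -> lenB n j <= 4 * m * n.+1 ^ j.+1.
Proof.
elim: n j => [|n IH] j j_m.
  by rewrite /lenB /= exp1n muln1; lia.
case: j j_m => [|j] j_m.
  by apply: leq_trans (lenB0 n.+1) _; rewrite expn1; lia.
apply: leq_trans (lenB_succ n (ltnW j_m)) _.
set a := n.+1 ^ j.+1.
have n_a : n.+1 <= a by rewrite -{1}(expn1 n.+1) leq_pexp2l.
have sum_le : \sum_(i < j.+2) lenB n i <= j.+1 * (4 * m * a) + 4 * m * (n.+1 * a).
  rewrite big_ord_recr /= leq_add //; last by rewrite -expnS IH.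
  apply: leq_trans (_ : \sum_(i < j.+1) 4 * m * a <= _); last by rewrite sum_nat_const card_ord.
  apply: leq_sum => i _; apply: leq_trans (IH i _) _; first by have := ltn_ord i; lia.
  by rewrite leq_mul2l leq_pexp2l ?orbT.
have growth := bernoulli_expn n.+1 j.+1; rewrite expnS -/a in growth.
have head_le : (m + j.+1) * n.*2.+1 <= 4 * m * a.
  by apply: leq_trans (leq_mul (_ : m + j.+1 <= 2 * m) (_ : n.*2.+1 <= 2 * a)) _; lia.
have := leq_mul (leqnn (4 * m)) growth; nia.
Qed.

Definition expB (n j : nat) : int := expsum m.-1 (iter n Phi [:: (m + j, false)]).

Lemma expsum_iter_Phi_Bprefix i n j :
  expsum i (iter n Phi (Bprefix m j)) = (\sum_(l < j) expsum i (iter n Phi [:: (m + l, false)]))%R.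
Proof.
elim: j => [|j IH]; first by rewrite iter_subst_nil big_ord0 /expsum big_nil.
by rewrite Bprefix_S iter_subst_cat expsum_cat IH big_ord_recr.
Qed.

Lemma expB0 j : 0 < m -> expB 0 j = 0%R.
Proof. by move=> m_gt0; rewrite /expB /= expsum1 ifN //=; lia. Qed.

Lemma expB_succ n j : j < m -> expB n.+1 j = (1 + \sum_(i < j.+1) expB n i)%R.
Proof.
move=> j_m; rewrite /expB -expsum_reduce iter_Phi_B 1?ltnW // expsum_reduce.
rewrite !expsum_cat !expsum_inv_word !expsum_cat !expsum_inv_word !expsum_Apowers.
(* A_m occurs once more in P_m(n+1) than in P_m(n), and not at all in P_j as j < m. *)
rewrite expsum_iter_Phi_Bprefix ltn_predL (leq_ltn_trans _ j_m) //.
have -> : (m.-1 < j) = false by lia.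
by rewrite !subr0 -addn1 PoszD [(_ + Posz 1)%R]addrC addrK.
Qed.

Lemma expB_binomial n j : j < m -> expB n j = Posz 'C(n + j, j.+1).
Proof.
elim: n j => [|n IH] j j_m; first by rewrite expB0 ?bin_small //; lia.
elim: j j_m => [|j IHj] j_m.
  by rewrite expB_succ // big_ord1 (IH 0) // !addn0 !bin1 -add1n PoszD.
rewrite expB_succ // big_ord_recr /= addrA -expB_succ 1?ltnW // IHj 1?ltnW // IH //.
by rewrite -PoszD (addSnnS n j) [n.+1 + _]addSn binS [in RHS]addnC.
Qed.

End PhiIterates.

Lemma letters_below_phi_gen m k g : g < m + k -> letters_below (m + k) (phi_gen m k g).
Proof.
have prefix_below r : r <= m + k -> letters_below (m + k) (Aprefix r).
  by move=> r_le; apply/allP=> x /mapP[i]; rewrite mem_iota => /andP[_ i_r] -> /=; lia.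
move=> g_lt; rewrite /phi_gen; case: ltnP => [g_m|m_g]; lazy zeta.
  by rewrite !letters_below_cat letters_below_inv_word /= g_lt !prefix_below //; lia.
rewrite !letters_below_cat letters_below_inv_word !prefix_below ?andTb ?andbT; try lia.
by apply/allP=> x /mapP[i]; rewrite mem_iota => /andP[_ i_r] -> /=; lia.
Qed.

Lemma ab_word_reduce m k w : ab_word m k (reduce w) = ab_word m k w.
Proof. by apply/matrixP=> i j; rewrite !mxE -/(expsum _ _) expsum_reduce. Qed.

Lemma ab_word_subst m k w : letters_below (m + k) w ->
  ab_word m k (subst_word (phi_gen m k) w) = (phi_ab m k *m ab_word m k w)%R.
Proof.
move=> w_below; apply/matrixP=> i j; rewrite !mxE -/(expsum _ _) (expsum_subst_word _ _ w_below).
by apply: eq_bigr => l _; rewrite !mxE.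
Qed.

Lemma letters_below_iter_Bk m k n : 0 < k ->
  letters_below (m + k) (iter n (subst_word (phi_gen m k)) (Bk m k)).
Proof.
move=> k_gt0; elim: n => [|n IH]; first by rewrite /letters_below /= andbT; lia.
exact/letters_below_subst_word/IH/letters_below_phi_gen.
Qed.

Lemma phi_ab_iterE m k n : 0 < k ->
  phi_ab_iter m k n = ab_word m k (iter n (subst_word (phi_gen m k)) (Bk m k)).
Proof.
move=> k_gt0; elim: n => [|n IH]; first by rewrite /phi_ab_iter expr0 mul1mx.
rewrite /phi_ab_iter exprS -mulmxE -mulmxA -/(phi_ab_iter m k n) IH iterS.
by rewrite ab_word_subst // letters_below_iter_Bk.
Qed.

Lemma phi_lenE m k n : phi_len m k n = lenB m k n k.-1.
Proof. by rewrite /phi_len iter_reduce_subst. Qed.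

Lemma l1norm_ab_word m k w : l1norm (ab_word m k w) <= size w.
Proof.
apply: leq_trans (sum_absz_expsum (m + k) w); rewrite leq_eqVlt; apply/orP; left.
by apply/eqP/eq_bigr => i _; rewrite mxE.
Qed.

Lemma absz_le_linfnorm p (v : 'cV[int]_p) i : absz (v i ord0) <= linfnorm v.
Proof. exact: (@leq_bigmax _ (fun j : 'I_p => absz (v j ord0)) i). Qed.

Lemma linfnorm_le_l1norm p (v : 'cV[int]_p) : linfnorm v <= l1norm v.
Proof. by apply/bigmax_leqP => i _; rewrite /l1norm (bigD1 i) //= leq_addr. Qed.

Lemma l1norm_le_linfnorm p (v : 'cV[int]_p) : l1norm v <= p * linfnorm v.
Proof.
rewrite -[p in p * _]card_ord -sum_nat_const.
by apply: leq_sum => i _; apply: absz_le_linfnorm.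
Qed.

Lemma expn_le_ffact n j : n ^ j.+1 <= (n + j) ^_ j.+1.
Proof.
elim: j => [|j IH]; first by rewrite addn0 ffactn1 expn1.
by rewrite addnS ffactSS expnS leq_mul // leqW // leq_addr.
Qed.

Lemma expSn_le n k : 0 < k -> n.+1 ^ k <= 2 ^ k * n ^ k + 1.
Proof.
move=> k_gt0; case: n => [|n]; first by rewrite exp1n exp0n // muln0.
by rewrite -expnMn (leq_trans _ (leq_addr _ _)) // leq_exp2r //; lia.
Qed.

Section Bounds.

Variables m k : nat.
Hypotheses (k_gt0 : 0 < k) (k_le_m : k <= m).

Lemma l1norm_le_phi_len n : l1norm (phi_ab_iter m k n) <= phi_len m k n.
Proof. by rewrite phi_ab_iterE // -ab_word_reduce /phi_len iter_reduce_subst // l1norm_ab_word. Qed.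

Lemma phi_len_le n : phi_len m k n <= 4 * m * 2 ^ k * n ^ k + 4 * m.
Proof.
rewrite phi_lenE; apply: leq_trans (lenB_le _ _ _) _; first by lia.
rewrite prednK //; apply: leq_trans (leq_mul (leqnn (4 * m)) (expSn_le n k_gt0)) _.
by rewrite mulnDr muln1 mulnA.
Qed.

Lemma expn_le_linfnorm n : n ^ k <= k`! * linfnorm (phi_ab_iter m k n).
Proof.
have Am_lt : m.-1 < m + k by lia.
apply: leq_trans (_ : 'C(n + k.-1, k) * k`! <= _).
  by rewrite bin_ffact; have := expn_le_ffact n k.-1; rewrite prednK.
rewrite mulnC leq_mul2l; apply/orP; right.
have := absz_le_linfnorm (phi_ab_iter m k n) (Ordinal Am_lt).
rewrite phi_ab_iterE // mxE -/(expsum _ _) -/(expB m k n k.-1) expB_binomial; last by lia.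
by rewrite prednK.
Qed.

Lemma phi_len_le_linfnorm n :
  phi_len m k n <= 4 * m * 2 ^ k * k`! * linfnorm (phi_ab_iter m k n) + 4 * m.
Proof.
apply: leq_trans (phi_len_le n) _.
by rewrite leq_add2r -[X in _ <= X]mulnA leq_mul2l expn_le_linfnorm orbT.
Qed.

End Bounds.

Lemma asym_equiv_of_bounds (f g : nat -> nat) (a b c : nat) : 0 < a -> 0 < c ->
  (forall n, f n <= a * g n + b) -> (forall n, g n <= c * f n) -> asym_equiv f g.
Proof.
move=> a_gt0 c_gt0 f_le g_le.
exists a%:R%R, b%:R%R, c%:R%R, 0%R; rewrite !ltr0n ler0n a_gt0 c_gt0; do 4!split => //.
by move=> n; rewrite addr0 -!natrM -natrD !ler_nat.
Qed.

Theorem corollary8p14 (m k : nat) (hk1 : 1 <= k) (hkm : k <= m) :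
  asym_equiv (fun n => phi_len m k n) (fun n => l1norm (phi_ab_iter m k n)) /\
  asym_equiv (fun n => l1norm (phi_ab_iter m k n)) (fun n => linfnorm (phi_ab_iter m k n)) /\
  asym_equiv (fun n => linfnorm (phi_ab_iter m k n)) (fun n => n ^ k).
Proof.
have C_gt0 : 0 < 4 * m * 2 ^ k by rewrite !muln_gt0 expn_gt0; lia.
split; [|split].
- apply: (@asym_equiv_of_bounds _ _ (4 * m * 2 ^ k * k`!) (4 * m) 1) => // [|n|n].
  + by rewrite muln_gt0 C_gt0 fact_gt0.
  + apply: leq_trans (phi_len_le_linfnorm hk1 hkm n) _.
    by rewrite leq_add2r leq_mul2l linfnorm_le_l1norm orbT.
  + by rewrite mul1n (l1norm_le_phi_len m hk1).
- apply: (@asym_equiv_of_bounds _ _ (m + k) 0 1) => // [|n|n]; first by lia.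
  + by rewrite addn0 l1norm_le_linfnorm.
  + by rewrite mul1n linfnorm_le_l1norm.
- apply: (@asym_equiv_of_bounds _ _ (4 * m * 2 ^ k) (4 * m) k`!) => // [|n|n].
  + exact: fact_gt0.
  + apply: leq_trans (linfnorm_le_l1norm _) (leq_trans (l1norm_le_phi_len m hk1 n) _).
    exact: phi_len_le hk1 hkm n.
  + exact: expn_le_linfnorm hk1 hkm n.
Qed.
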